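(* Let $(X,Y,G)$ be random with $X\in\mathcal{X}$, $Y\in\{0,1\}$, $G\in\{a,b\}$, $\Pr[G=g]>0$ and $0<p_g<1$ for $g\in\{a,b\}$, where $p_g:=\Pr[Y=1\mid G=g]$, and $\Delta p:=p_a-p_b\neq0$. Let $k$ be a positive-definite kernel on $\mathcal{X}$ with RKHS $\mathcal{H}$ and feature map $\phi$ such that the class-conditional mean embeddings $\mu_{y,g}:=\mathbb{E}[\phi(X)\mid Y=y,G=g]$ exist, and set $\delta_y:=\mu_{y,a}-\mu_{y,b}$. Fix a subspace $V_m\subseteq\mathcal{H}$ with $\dim V_m\le m$ and suppose $P_{V_m}\delta_y=0$ for $y\in\{0,1\}$, where $P_{V_m}$ is the orthogonal projection onto $V_m$. Let $S=\langle w,\phi(X)\rangle_{\mathcal{H}}$ with $w\in\mathcal{H}$, $\|w\|_{\mathcal{H}}\le W$, $S\in[0,1]$ almost surely, and $\mathbb{E}[S\mid G=g]=p_g$ for $g\in\{a,b\}$. Then for every $t\in(0,1]$, \[\Pr\big[|S-Y|>t\big]\;\le\;\frac{W\rho_m}{|\Delta p|\,t},\qquad \rho_m:=\max_{h\in\{a,b\}}\big[p_h\|\delta_1\|_{\mathcal{H}}+(1-p_h)\|\delta_0\|_{\mathcal{H}}\big].\]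
   Context: The score $S$ is a linear function in the RKHS, i.e. $S=w(X)$ by the reproducing property. (The paper writes the maximum in $\rho_m$ as over $g$ of the expression with the opposite group $\bar g$, which ranges over both groups.) *)

From HB Require Import structures.
From mathcomp Require Import all_boot all_order all_algebra.
From mathcomp Require Import all_classical all_reals all_analysis.
Set Implicit Arguments. Unset Strict Implicit. Unset Printing Implicit Defensive.
Import Order.TTheory GRing.Theory Num.Theory.
Local Open Scope classical_set_scope.
Local Open Scope ring_scope.

Section Hilbert.
Variables (R : realType) (H : lmodType R).

Record inner_product (ip : H -> H -> R) : Prop := {
  ip_sym : forall u v, ip u v = ip v u;
  ip_linl : forall (a : R) u v z, ip (a *: u + v) z = a * ip u z + ip v z;
  ip_pos : forall u, u != 0 -> 0 < ip u u }.

Definition hnorm (ip : H -> H -> R) (u : H) : R := Num.sqrt (ip u u).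

Definition hcomplete (ip : H -> H -> R) : Prop :=
  forall u : nat -> H,
    (forall e : R, 0 < e -> exists N : nat, forall m n : nat,
        (N <= m)%N -> (N <= n)%N -> hnorm ip (u m - u n) < e) ->
    exists l : H, forall e : R, 0 < e -> exists N : nat, forall n : nat,
        (N <= n)%N -> hnorm ip (u n - l) < e.

Definition hilbert (ip : H -> H -> R) : Prop := inner_product ip /\ hcomplete ip.

Definition subspace_dim_le (V : set H) (m : nat) : Prop :=
  V 0 /\ (forall (a : R) u v, V u -> V v -> V (a *: u + v)) /\
  exists vs : 'I_m -> H,
    V = [set u | exists c : 'I_m -> R, u = \sum_(i < m) c i *: vs i].

(* p is the orthogonal projection of v onto V  (i.e. P_V v = p) *)
Definition is_orth_proj (ip : H -> H -> R) (V : set H) (v p : H) : Prop :=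
  V p /\ forall u, V u -> ip (v - p) u = 0.
End Hilbert.

(* positive-definite kernel (Gram matrices are positive semidefinite) *)
Definition pd_kernel (R : realType) (T : Type) (k : T -> T -> R) : Prop :=
  forall (n : nat) (c : 'I_n -> R) (xs : 'I_n -> T),
    0 <= \sum_(i < n) \sum_(j < n) c i * c j * k (xs i) (xs j).

(* H (with inner product ip) is the RKHS of k on T with feature map phi:
   ev identifies elements of H with functions on T (linearly, injectively),
   phi x = k(x, .) and the reproducing property holds. *)
Definition is_RKHS (R : realType) (T : Type) (H : lmodType R)
    (ip : H -> H -> R) (k : T -> T -> R) (ev : H -> T -> R) (phi : T -> H) : Prop :=
  [/\ hilbert ip,
      (forall (a : R) f g x, ev (a *: f + g) x = a * ev f x + ev g x),
      (forall f, ev f = (fun _ => 0) -> f = 0),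
      (forall x, ev (phi x) = k x) &
      (forall f x, ev f x = ip f (phi x))].

Definition cprob (R : realType) d (Om : measurableType d)
    (P : probability Om R) (A B : set Om) : R :=
  fine (P (A `&` B)) / fine (P B).

Definition cexp (R : realType) d (Om : measurableType d)
    (P : probability Om R) (f : Om -> R) (B : set Om) : R :=
  fine (\int[P]_(w in B) (f w)%:E) / fine (P B).

From HB Require Import structures.
From mathcomp Require Import all_boot all_order all_algebra.
From mathcomp Require Import all_classical all_reals all_analysis measurable_realfun.
From mathcomp Require Import ring lra.
Set Implicit Arguments. Unset Strict Implicit. Unset Printing Implicit Defensive.
Import Order.TTheory GRing.Theory Num.Theory.
Local Open Scope classical_set_scope.
Local Open Scope ring_scope.

(* Markov's inequality reduces the claim to bounding E|S - Y|.  On the cell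
   {Y = y, G = g} the score has mean r_yg = <w, mu_yg>, and since 0 <= S <= 1,
   E|S - Y| = sum_g P(Y=1, G=g) (1 - r_1g) + P(Y=0, G=g) r_0g
           <= sum_g P(G=g) (1 - r_1g + r_0g).
   Calibration in group g reads p_g r_1g + (1 - p_g) r_0g = p_g; subtracting the
   identities of the two groups gives
   (p_a - p_b) (1 - r_1b + r_0b) = p_a (r_1a - r_1b) + (1 - p_a) (r_0a - r_0b),
   where |r_ya - r_yb| = |<w, delta_y>| <= W ||delta_y|| by Cauchy-Schwarz.
   Hence |p_a - p_b| (1 - r_1g + r_0g) <= W rho for both groups. *)

Section InnerProduct.
Variables (R : realType) (H : lmodType R) (ip : H -> H -> R).
Hypothesis ipP : inner_product ip.

Lemma ip0l u : ip 0 u = 0.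
Proof. by have := ip_linl ipP 1 0 0 u; rewrite scale1r addr0 mul1r; lra. Qed.

Lemma ipBr z u v : ip z (u - v) = ip z u - ip z v.
Proof.
rewrite ip_sym // addrC -scaleN1r ip_linl // !(ip_sym ipP _ z); lra.
Qed.

Lemma ip_ge0 u : 0 <= ip u u.
Proof.
by have [->|u0] := eqVneq u 0; [rewrite ip0l | exact/ltW/(ip_pos ipP)].
Qed.

Lemma ip_sqr_le u v : ip u v ^+ 2 <= ip u u * ip v v.
Proof.
have [->|u0] := eqVneq u 0; first by rewrite !ip0l expr2 !mul0r.
have uu_gt0 : 0 < ip u u := ip_pos ipP u0.
pose x := - (ip u v / ip u u).
have := ip_ge0 (x *: u + v).
rewrite ip_linl // (ip_sym ipP u) (ip_sym ipP v) !ip_linl // (ip_sym ipP v u) => h.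
have : 0 <= ip u u * (x * (x * ip u u + ip u v) + (x * ip u v + ip v v)).
  by rewrite mulr_ge0 // ltW.
have -> : ip u u * (x * (x * ip u u + ip u v) + (x * ip u v + ip v v)) =
          ip u u * ip v v - ip u v ^+ 2.
  by rewrite /x; field; rewrite gt_eqF.
by rewrite subr_ge0.
Qed.

Lemma cauchy_schwarz u v : `|ip u v| <= hnorm ip u * hnorm ip v.
Proof.
by rewrite /hnorm -sqrtrM ?ip_ge0 // -sqrtr_sqr ler_wsqrtr // ip_sqr_le.
Qed.

End InnerProduct.

Lemma weighted_mean2 (R : realFieldType) (P1 P0 r1 r0 : R) : P1 + P0 != 0 ->
  (r1 * P1 + r0 * P0) / (P1 + P0) =
  P1 / (P1 + P0) * r1 + (1 - P1 / (P1 + P0)) * r0.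
Proof. by move=> s_neq0; field. Qed.

Lemma gt0_of_ratio_in01 (R : realFieldType) (a b : R) : 0 <= a -> 0 <= b ->
  0 < a / (a + b) < 1 -> 0 < a /\ 0 < b.
Proof.
move=> a_ge0 b_ge0 /andP[ratio_gt0 ratio_lt1].
have s_gt0 : 0 < a + b.
  rewrite lt_def addr_ge0 // andbT.
  by apply: contraTneq ratio_gt0 => ->; rewrite invr0 mulr0 ltxx.
rewrite pmulr_lgt0 ?invr_gt0 // in ratio_gt0.
rewrite ltr_pdivrMr // mul1r in ratio_lt1.
by split; lra.
Qed.

Section TwoGroups.
Variable R : realFieldType.
Variables (p : bool -> R) (r : bool -> bool -> R) (n : bool -> R) (W : R).
Hypotheses (p01 : forall g, 0 <= p g <= 1) (W_ge0 : 0 <= W).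
Hypothesis calibrated : forall g, p g * r true g + (1 - p g) * r false g = p g.
Hypothesis r_gap : forall y, `|r y true - r y false| <= W * n y.

Let rho := Num.max (p true * n true + (1 - p true) * n false)
                   (p false * n true + (1 - p false) * n false).

Lemma calibration_gap a b :
  (p a - p b) * ((1 - r true b) + r false b) =
  p a * (r true a - r true b) + (1 - p a) * (r false a - r false b).
Proof. by have := calibrated a; have := calibrated b; lra. Qed.

Lemma error_rates_le g :
  `|p true - p false| * `|(1 - r true g) + r false g| <= W * rho.
Proof.
have gap_le a : `|p a - p (~~ a)| * `|(1 - r true (~~ a)) + r false (~~ a)| <=
                W * (p a * n true + (1 - p a) * n false).
  have /andP[pa_ge0 pa_le1] := p01 a.
  have pa'_ge0 : 0 <= 1 - p a by rewrite subr_ge0.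
  have r_gap_a y : `|r y a - r y (~~ a)| <= W * n y.
    by case: a {pa_ge0 pa_le1 pa'_ge0}; rewrite /= ?(distrC (r y false)); apply: r_gap.
  rewrite -normrM calibration_gap; apply: le_trans (ler_normD _ _) _.
  rewrite !normrM (ger0_norm pa_ge0) (ger0_norm pa'_ge0).
  have := ler_wpM2l pa_ge0 (r_gap_a true); have := ler_wpM2l pa'_ge0 (r_gap_a false).
  by lra.
case: g.
- have /= := gap_le false; rewrite distrC => /le_trans; apply.
  by rewrite ler_wpM2l // le_max lexx orbT.
- have /= := gap_le true => /le_trans; apply.
  by rewrite ler_wpM2l // le_max lexx.
Qed.

Lemma two_group_error_le (Pr : bool -> bool -> R) :
  (forall y g, 0 <= Pr y g) ->
  (Pr true true + Pr false true) + (Pr true false + Pr false false) = 1 ->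
  (forall g, 0 <= 1 - r true g) -> (forall g, 0 <= r false g) ->
  p true - p false != 0 ->
  ((Pr true true - r true true * Pr true true) + r false true * Pr false true) +
  ((Pr true false - r true false * Pr true false) + r false false * Pr false false)
  <= W * rho / `|p true - p false|.
Proof.
move=> Pr_ge0 Pr_sum r1_le1 r0_ge0 dp_neq0.
have dp_gt0 : 0 < `|p true - p false| by rewrite normr_gt0.
have group_le g : (Pr true g - r true g * Pr true g) + r false g * Pr false g <=
                  (Pr true g + Pr false g) * (W * rho / `|p true - p false|).
  have q_ge0 : 0 <= (1 - r true g) + r false g by rewrite addr_ge0.
  apply: (@le_trans _ _ ((Pr true g + Pr false g) * ((1 - r true g) + r false g))).
    have := mulr_ge0 (Pr_ge0 true g) (r0_ge0 g).
    have := mulr_ge0 (Pr_ge0 false g) (r1_le1 g).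
    by lra.
  rewrite ler_wpM2l ?addr_ge0 // ler_pdivlMr // mulrC -(ger0_norm q_ge0).
  exact: error_rates_le.
apply: le_trans (lerD (group_le true) (group_le false)) _.
by rewrite -mulrDl Pr_sum mul1r.
Qed.

End TwoGroups.

Section MarkovOnSet.
Variables (d : measure_display) (T : measurableType d) (R : realType).
Variables (mu : {measure set T -> \bar R}) (D : set T) (f : T -> R).
Hypotheses (mD : measurable D) (mf : measurable_fun D f).

Let measurable_fun_dist (c : R) : measurable_fun D (fun x => `|f x - c|).
Proof. by apply: measurableT_comp => //; apply: measurable_funB. Qed.

Lemma measurable_dist_gt (c t : R) : measurable (D `&` [set x | t < `|f x - c|]).
Proof.
have := measurable_fun_dist c mD (measurable_itv `]t, +oo[).
by congr measurable; apply/seteqP; split => x [Dx] /=; rewrite ?in_itv /= ?andbT.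
Qed.

Lemma markov_setI (c t : R) : 0 < t ->
  (t%:E * mu (D `&` [set x | (t < `|f x - c|)%R]) <=
   \int[mu]_(x in D) (`|f x - c|)%:E)%E.
Proof.
move=> t_gt0.
have mfc : measurable_fun D (fun x => (f x - c)%:E).
  by apply/measurable_EFinP; apply: measurable_funB.
apply: le_trans (le_integral_abse mu mD mfc t_gt0).
apply: lee_wpmul2l; first by rewrite lee_fin ltW.
apply: le_measure; rewrite ?inE.
- exact: measurable_dist_gt.
- have := measurable_fun_dist c mD (measurable_itv `[t, +oo[).
  by congr measurable; apply/seteqP; split => x [Dx] /=; rewrite ?in_itv /= ?andbT ?lee_fin.
- by move=> x [Dx /= /ltW tx]; split; rewrite //= lee_fin.
Qed.

End MarkovOnSet.

Section UnitIntervalIntegrals.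
Variables (d : measure_display) (T : measurableType d) (R : realType).
Variables (mu : {finite_measure set T -> \bar R}) (D : set T) (f : T -> R).
Hypotheses (mD : measurable D) (f_int : mu.-integrable D (EFin \o f)).
Hypothesis f01 : {ae mu, forall x, 0 <= f x <= 1}.

Let mf : measurable_fun D f.
Proof. by move/integrableP: f_int => [/measurable_EFinP]. Qed.

Lemma integral_dist0 :
  (\int[mu]_(x in D) (`|f x - 0|)%:E = \int[mu]_(x in D) (f x)%:E)%E.
Proof.
apply: ae_eq_integral => //.
- by apply/measurable_EFinP; apply: measurableT_comp => //; apply: measurable_funB.
- by apply/measurable_EFinP.
- by apply: filterS f01 => x /andP[f_ge0 _] _; rewrite subr0 ger0_norm.
Qed.

Lemma integral_dist1 :
  (\int[mu]_(x in D) (`|f x - 1|)%:E =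
   (fine (mu D) - fine (\int[mu]_(x in D) (f x)%:E))%:E)%E.
Proof.
rewrite (ae_eq_integral (fun x => (1 - f x)%:E)) //; last 3 first.
- by apply/measurable_EFinP; apply: measurableT_comp => //; apply: measurable_funB.
- by apply/measurable_EFinP; apply: measurable_funB.
- by apply: filterS f01 => x /andP[_ f_le1] _; rewrite distrC ger0_norm // subr_ge0.
rewrite (integralB_EFin mD (finite_measure_integrable_cst mu 1 mD) f_int).
rewrite (integral_cst mu mD 1) mul1e.
by rewrite EFinB !fineK ?fin_num_measure ?integrable_fin_num.
Qed.

Lemma fine_integral_unit_bounds :
  0 <= fine (\int[mu]_(x in D) (f x)%:E) <= fine (mu D).
Proof.
have dist_ge0 c : (0 <= \int[mu]_(x in D) (`|f x - c|)%:E)%E.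
  by apply: integral_ge0 => x _; rewrite lee_fin.
have := dist_ge0 0; have := dist_ge0 1.
rewrite integral_dist0 integral_dist1 lee_fin subr_ge0 => -> int_ge0.
by rewrite fine_ge0.
Qed.

End UnitIntervalIntegrals.

Section Cells.
Variables (d : measure_display) (Om : measurableType d) (R : realType).
Variables (P : probability Om R) (Y G : Om -> bool) (S : Om -> R).
Hypotheses (mY : forall y, measurable [set om | Y om = y])
           (mG : forall g, measurable [set om | G om = g]).

Definition cell y g := [set om | Y om = y /\ G om = g].

Definition cell_mass y g := fine (P (cell y g)).

Lemma measurable_cell y g : measurable (cell y g).
Proof. exact: measurableI (mY y) (mG g). Qed.

Lemma group_cellU g : [set om | G om = g] = cell true g `|` cell false g.
Proof.
apply/seteqP; split => [om /= Gg|om [] [] //].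
by rewrite /cell /=; case: (Y om); [left|right].
Qed.

Lemma cells_disj g : cell true g `&` cell false g = set0.
Proof. by apply/seteqP; split => om // [[Yt _] [Yf _]]; rewrite Yt in Yf. Qed.

Lemma fine_measure_group g :
  fine (P [set om | G om = g]) = cell_mass true g + cell_mass false g.
Proof.
rewrite group_cellU measureU ?fineD ?fin_num_measure ?cells_disj //.
all: exact: measurable_cell.
Qed.

Lemma cell_masses_sum1 :
  (cell_mass true true + cell_mass false true) +
  (cell_mass true false + cell_mass false false) = 1.
Proof.
rewrite -!fine_measure_group -fineD ?fin_num_measure // -measureU //; last first.
  by apply/seteqP; split => om // [/= ->].
have -> : [set om | G om = true] `|` [set om | G om = false] = setT.
  by apply/seteqP; split => om // _ /=; case: (G om); [left|right].
by rewrite [X in fine X](probability_setT P).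
Qed.

Let pY g := cprob P [set om | Y om = true] [set om | G om = g].

Lemma cprob_cellE g : pY g = cell_mass true g / (cell_mass true g + cell_mass false g).
Proof. by rewrite /pY /cprob fine_measure_group. Qed.

Lemma cell_mass_gt0 y g : 0 < pY g < 1 -> 0 < cell_mass y g.
Proof.
have mass_ge0 y' : 0 <= cell_mass y' g by exact/fine_ge0/measure_ge0.
rewrite cprob_cellE => /(gt0_of_ratio_in01 (mass_ge0 true) (mass_ge0 false)) [? ?].
by case: y.
Qed.

Hypothesis S_int : forall y g, P.-integrable (cell y g) (EFin \o S).
Hypothesis S01 : {ae P, forall om, 0 <= S om <= 1}.

Definition cell_integral y g := fine (\int[P]_(om in cell y g) (S om)%:E).

Let mS y g : measurable_fun (cell y g) S.
Proof. by move/integrableP: (S_int y g) => [/measurable_EFinP]. Qed.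

Lemma cexp_groupE g :
  cexp P S [set om | G om = g] =
  (cell_integral true g + cell_integral false g) /
  (cell_mass true g + cell_mass false g).
Proof.
rewrite /cexp fine_measure_group group_cellU integral_setU; try exact: measurable_cell.
- by rewrite fineD ?integrable_fin_num //; exact: measurable_cell.
- by apply/measurable_funU; try exact: measurable_cell; split; apply/measurable_EFinP.
- exact/disj_set2P/cells_disj.
Qed.

Lemma cell_integral_bounds y g :
  0 <= cell_integral y g <= cell_mass y g.
Proof. exact: fine_integral_unit_bounds (measurable_cell y g) (S_int y g) S01. Qed.

Definition cell_error_event (t : R) y g :=
  cell y g `&` [set om | t < `|S om - (y : nat)%:R|].

Lemma measurable_cell_error_event (t : R) y g : measurable (cell_error_event t y g).
Proof. exact: measurable_dist_gt (measurable_cell y g) (@mS y g) (y : nat)%:R t. Qed.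

Lemma measure_error_event_le (t : R) :
  (P [set om | (t < `|S om - (Y om)%:R|)%R] <=
   (P (cell_error_event t true true) + P (cell_error_event t false true)) +
   (P (cell_error_event t true false) + P (cell_error_event t false false)))%E.
Proof.
have -> : [set om | (t < `|S om - (Y om)%:R|)%R] =
    (cell_error_event t true true `|` cell_error_event t false true) `|`
    (cell_error_event t true false `|` cell_error_event t false false).
  apply/seteqP; split => [om /= err|om /=]; last by case=> -[] [[-> _] ?].
  rewrite /cell_error_event /cell /=.
  by case: (Y om) err; case: (G om) => err; [left; left|right; left|left; right|right; right].
have mE := measurable_cell_error_event t.
apply: le_trans (measureU2 _ _ _) _; try exact: measurableU (mE _ _) (mE _ _).
by apply: leeD; apply: measureU2; exact: mE.
Qed.

Lemma cell_markov1 (t : R) g : 0 < t ->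
  t * fine (P (cell_error_event t true g)) <=
  cell_mass true g - cell_integral true g.
Proof.
move=> t_gt0; have := markov_setI P (measurable_cell true g) (@mS true g) 1 t_gt0.
rewrite (integral_dist1 (measurable_cell true g) (S_int true g) S01).
have Efin := fin_num_measure P _ (measurable_cell_error_event t true g).
by rewrite -[X in (_ * X <= _)%E](fineK Efin) -EFinM lee_fin.
Qed.

Lemma cell_markov0 (t : R) g : 0 < t ->
  t * fine (P (cell_error_event t false g)) <=
  cell_integral false g.
Proof.
move=> t_gt0; have := markov_setI P (measurable_cell false g) (@mS false g) 0 t_gt0.
rewrite (integral_dist0 (measurable_cell false g) (S_int false g) S01).
have Efin := fin_num_measure P _ (measurable_cell_error_event t false g).
rewrite -[X in (_ * X <= _)%E](fineK Efin) -EFinM.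
by rewrite -(fineK (integrable_fin_num (measurable_cell false g) (S_int false g))) lee_fin.
Qed.

Definition group_error_mass g :=
  (cell_mass true g - cell_integral true g) + cell_integral false g.

Lemma error_event_le (t : R) : 0 < t ->
  (P [set om | (t < `|S om - (Y om)%:R|)%R] <=
   ((group_error_mass true + group_error_mass false) / t)%:E)%E.
Proof.
move=> t_gt0; apply: le_trans (measure_error_event_le t) _.
have fineE y g : P (cell_error_event t y g) = (fine (P (cell_error_event t y g)))%:E.
  by rewrite fineK // fin_num_measure //; exact: measurable_cell_error_event.
rewrite (fineE true true) (fineE false true) (fineE true false) (fineE false false).
rewrite -!EFinD lee_fin ler_pdivlMr // /group_error_mass.
have := cell_markov1 true t_gt0; have := cell_markov1 false t_gt0.
have := cell_markov0 true t_gt0; have := cell_markov0 false t_gt0.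
by lra.
Qed.

Variable r : bool -> bool -> R.
Hypothesis mass_gt0 : forall y g, 0 < cell_mass y g.
Hypothesis cell_integralE : forall y g, cell_integral y g = r y g * cell_mass y g.

Lemma calibrated_of_cexp g :
  cexp P S [set om | G om = g] = pY g ->
  pY g * r true g + (1 - pY g) * r false g = pY g.
Proof.
rewrite cexp_groupE !cell_integralE weighted_mean2 -?cprob_cellE //.
by rewrite gt_eqF ?addr_gt0.
Qed.

Lemma cell_means_in01 g : 0 <= 1 - r true g /\ 0 <= r false g.
Proof.
have /andP[_ I1_le] := cell_integral_bounds true g.
have /andP[I0_ge0 _] := cell_integral_bounds false g.
rewrite cell_integralE -subr_ge0 -{1}(mul1r (cell_mass _ _)) -mulrBl in I1_le.
by rewrite cell_integralE !pmulr_lge0 in I0_ge0 I1_le.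
Qed.

End Cells.

(* G ω = true  encodes group a,  G ω = false  encodes group b. *)
Theorem theorem7 (R : realType) (d : measure_display) (Om : measurableType d)
  (P : probability Om R) (T : Type) (X : Om -> T) (Y G : Om -> bool)
  (H : lmodType R) (ip : H -> H -> R) (k : T -> T -> R)
  (ev : H -> T -> R) (phi : T -> H)
  (mu : bool -> bool -> H) (V : set H) (m : nat) (w : H) (W : R) :
  (forall b, measurable [set om | Y om = b]) ->
  (forall g, measurable [set om | G om = g]) ->
  (forall g, (0 < P [set om | G om = g])%E) ->
  let p g := cprob P [set om | Y om = true] [set om | G om = g] in
  (forall g, 0 < p g < 1) ->
  p true - p false != 0 ->
  pd_kernel k ->
  is_RKHS ip k ev phi ->
  (* mu y g = E[phi(X) | Y = y, G = g] (mean embedding, characterized weakly) *)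
  (forall y g f,
     P.-integrable [set om | Y om = y /\ G om = g] (fun om => (ip f (phi (X om)))%:E) /\
     ip f (mu y g) = cexp P (fun om => ip f (phi (X om))) [set om | Y om = y /\ G om = g]) ->
  let delta y := mu y true - mu y false in
  subspace_dim_le V m ->
  (forall y, is_orth_proj ip V (delta y) 0) ->
  let S om := ip w (phi (X om)) in
  hnorm ip w <= W ->
  {ae P, forall om, 0 <= S om <= 1} ->
  (forall g, cexp P S [set om | G om = g] = p g) ->
  let rho := Num.max
      (p true * hnorm ip (delta true) + (1 - p true) * hnorm ip (delta false))
      (p false * hnorm ip (delta true) + (1 - p false) * hnorm ip (delta false)) in
  forall t : R, 0 < t <= 1 ->
    (P [set om | (t < `|S om - (Y om)%:R|)%R] <=
       (W * rho / (`|p true - p false| * t))%:E)%E.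
Proof.
move=> mY mG _ p p_in01 dp_neq0 _ [[ipP _] _ _ _ _] mu_mean delta _ _ S w_le S01 S_mean
  rho t /andP[t_gt0 _].
pose r y g := ip w (mu y g).
have S_int y g : P.-integrable (cell Y G y g) (EFin \o S) by case: (mu_mean y g w).
have mass_gt0 y g : 0 < cell_mass P Y G y g := cell_mass_gt0 mY mG y (p_in01 g).
have cell_integralE y g : cell_integral P Y G S y g = r y g * cell_mass P Y G y g.
  rewrite /r; have [_ ->] := mu_mean y g w.
  by rewrite /cexp divfK // (gt_eqF (mass_gt0 y g)).
have calibrated g := calibrated_of_cexp mY mG S_int mass_gt0 cell_integralE (S_mean g).
have r_in01 g := cell_means_in01 mY mG S_int S01 mass_gt0 cell_integralE g.
have r_gap y : `|r y true - r y false| <= W * hnorm ip (delta y).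
  rewrite -ipBr //; apply: le_trans (cauchy_schwarz ipP w (delta y)) _.
  by rewrite ler_wpM2r ?sqrtr_ge0.
apply: le_trans (error_event_le mY mG S_int S01 t_gt0) _.
rewrite lee_fin invfM mulrA ler_pM2r ?invr_gt0 // /group_error_mass !cell_integralE.
apply: (@two_group_error_le _ p r (fun y => hnorm ip (delta y))) => //.
- by move=> g; have /andP[/ltW -> /ltW ->] := p_in01 g.
- exact: le_trans (sqrtr_ge0 _) w_le.
- by move=> y g; apply: ltW.
- exact: cell_masses_sum1.
- by move=> g; case: (r_in01 g).
- by move=> g; case: (r_in01 g).
Qed.
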